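(* Let $\mathcal{T}_1,\mathcal{T}_2,\mathcal{T}_3$ be channelled transition systems and let $\|$ be the parallel composition defined below. Then (i) $\mathcal{T}_1\|\mathcal{T}_2=\mathcal{T}_2\|\mathcal{T}_1$, and (ii) $(\mathcal{T}_1\|\mathcal{T}_2)\|\mathcal{T}_3=\mathcal{T}_1\|(\mathcal{T}_2\|\mathcal{T}_3)$, where these equalities are understood up to the canonical identification of composite states (and state labels) $(s_1,s_2)$ with $(s_2,s_1)$, respectively $((s_1,s_2),s_3)$ with $(s_1,(s_2,s_3))$.
   Context: A channelled transition system (CTS) is a tuple $\mathcal{T}=\langle C,\Sigma,\Upsilon,S,S_0,R,L,\mathsf{ls}\rangle$ where $C$ is a set of channels containing a distinguished broadcast channel $\star$, $\Sigma$ is a state alphabet, $\Upsilon=\Upsilon^+\times\{!,?\}\times C$ for some set $\Upsilon^+$ (a label $(\upsilon,!,c)$ is a send and $(\upsilon,?,c)$ a receive of $\upsilon$ on channel $c$), $S$ is a set of states, $S_0\subseteq S$ the initial states, $R\subseteq S\times\Upsilon\times S$ the transition relation, $L:S\to\Sigma$ a labelling, and $\mathsf{ls}:S\to 2^C$ a listening function with $\star\in\mathsf{ls}(s)$ for all $s$. The composition of $\mathcal{T}_i=\langle C_i,\Sigma_i,\Upsilon_i,S_i,S_0^i,R_i,L_i,\mathsf{ls}^i\rangle$ ($i=1,2$) is $\mathcal{T}_1\|\mathcal{T}_2=\langle C_1\cup C_2,\Sigma_1\times\Sigma_2,\Upsilon_1\cup\Upsilon_2,S_1\times S_2,S_0^1\times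 S_0^2,R,L,\mathsf{ls}\rangle$ with $L(s_1,s_2)=(L_1(s_1),L_2(s_2))$, $\mathsf{ls}(s_1,s_2)=\mathsf{ls}^1(s_1)\cup\mathsf{ls}^2(s_2)$, and $R$ the union of the following three sets: (1) triples $((s_1,s_2),(\upsilon,!,c),(s_1',s_2'))$ such that one of: $(s_1,(\upsilon,!,c),s_1')\in R_1$ and $(s_2,(\upsilon,?,c),s_2')\in R_2$; or $(s_1,(\upsilon,?,c),s_1')\in R_1$ and $(s_2,(\upsilon,!,c),s_2')\in R_2$; or $(s_1,(\upsilon,!,c),s_1')\in R_1$, $c\notin\mathsf{ls}^2(s_2)$ and $s_2=s_2'$; or $c\notin\mathsf{ls}^1(s_1)$, $s_1=s_1'$ and $(s_2,(\upsilon,!,c),s_2')\in R_2$; (2) triples $((s_1,s_2),(\upsilon,?,c),(s_1',s_2'))$ such that one of: $(s_1,(\upsilon,?,c),s_1')\in R_1$ and $(s_2,(\upsilon,?,c),s_2')\in R_2$; or $(s_1,(\upsilon,?,c),s_1')\in R_1$, $c\notin\mathsf{ls}^2(s_2)$ and $s_2=s_2'$; or $c\notin\mathsf{ls}^1(s_1)$, $s_1=s_1'$ and $(s_2,(\upsilon,?,c),s_2')\in R_2$; (3) triples $((s_1,s_2),(\upsilon,\gamma,\star),(s_1',s_2'))$ with $\gamma\in\{!,?\}$ such that either $(s_1,(\upsilon,\gamma,\star),s_1')\in R_1$, $s_2=s_2'$ and there is no $s_2''$ with $(s_2,(\upsilon,?,\star),s_2'')\in R_2$; or $s_1=s_1'$,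 there is no $s_1''$ with $(s_1,(\upsilon,?,\star),s_1'')\in R_1$, and $(s_2,(\upsilon,\gamma,\star),s_2')\in R_2$. *)

Set Implicit Arguments.

Inductive dir : Type := Snd | Rcv.

Section CTSDefs.
(* Ch : universe of channels (containing the broadcast channel [star]),
   U  : universe of message contents (Upsilon^+ is a subset of it). *)
Variables (Ch U : Type) (star : Ch).

Definition label : Type := (U * dir * Ch)%type.

Record CTS : Type := mkCTS {
  chans : Ch -> Prop;
  Sig   : Type;
  ups   : label -> Prop;
  St    : Type;
  init  : St -> Prop;
  trans : St -> label -> St -> Prop;
  lab   : St -> Sig;
  ls    : St -> Ch -> Prop
}.

Definition wf_CTS (T : CTS) : Prop :=
  chans T star /\
  (exists Uplus : U -> Prop,
      forall v d c, ups T (v, d, c) <-> (Uplus v /\ chans T c)) /\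
  (forall s l s', trans T s l s' -> ups T l) /\
  (forall s c, ls T s c -> chans T c) /\
  (forall s, ls T s star).

Definition comp_trans (T1 T2 : CTS)
  (p : St T1 * St T2) (l : label) (p' : St T1 * St T2) : Prop :=
  let (s1, s2) := p in let (s1', s2') := p' in
  match l with (v, g, c) =>
  (g = Snd /\
    ( (trans T1 s1 (v, Snd, c) s1' /\ trans T2 s2 (v, Rcv, c) s2')
   \/ (trans T1 s1 (v, Rcv, c) s1' /\ trans T2 s2 (v, Snd, c) s2')
   \/ (trans T1 s1 (v, Snd, c) s1' /\ ~ ls T2 s2 c /\ s2 = s2')
   \/ (~ ls T1 s1 c /\ s1 = s1' /\ trans T2 s2 (v, Snd, c) s2')))
  \/
  (g = Rcv /\
    ( (trans T1 s1 (v, Rcv, c) s1' /\ trans T2 s2 (v, Rcv, c) s2')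
   \/ (trans T1 s1 (v, Rcv, c) s1' /\ ~ ls T2 s2 c /\ s2 = s2')
   \/ (~ ls T1 s1 c /\ s1 = s1' /\ trans T2 s2 (v, Rcv, c) s2')))
  \/
  (c = star /\
    ( (trans T1 s1 (v, g, star) s1' /\ s2 = s2' /\
         ~ (exists s2'', trans T2 s2 (v, Rcv, star) s2''))
   \/ (s1 = s1' /\ ~ (exists s1'', trans T1 s1 (v, Rcv, star) s1'') /\
         trans T2 s2 (v, g, star) s2')))
  end.

Definition comp (T1 T2 : CTS) : CTS := {|
  chans := fun c => chans T1 c \/ chans T2 c;
  Sig   := (Sig T1 * Sig T2)%type;
  ups   := fun l => ups T1 l \/ ups T2 l;
  St    := (St T1 * St T2)%type;
  init  := fun p => init T1 (fst p) /\ init T2 (snd p);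
  trans := comp_trans T1 T2;
  lab   := fun p => (lab T1 (fst p), lab T2 (snd p));
  ls    := fun p c => ls T1 (fst p) c \/ ls T2 (snd p) c
|}.

Definition equal_upto (T T' : CTS) (f : St T -> St T') (g : Sig T -> Sig T')
  : Prop :=
  (exists f' : St T' -> St T,
     (forall s, f' (f s) = s) /\ (forall s', f (f' s') = s')) /\
  (exists g' : Sig T' -> Sig T,
     (forall x, g' (g x) = x) /\ (forall x', g (g' x') = x')) /\
  (forall c, chans T c <-> chans T' c) /\
  (forall l, ups T l <-> ups T' l) /\
  (forall s, init T s <-> init T' (f s)) /\
  (forall s l s', trans T s l s' <-> trans T' (f s) l (f s')) /\
  (forall s, lab T' (f s) = g (lab T s)) /\
  (forall s c, ls T s c <-> ls T' (f s) c).

End CTSDefs.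

Definition swap {A B : Type} (p : A * B) : B * A := (snd p, fst p).
Definition assoc {A B C : Type} (p : (A * B) * C) : A * (B * C) :=
  (fst (fst p), (snd (fst p), snd p)).

From Stdlib Require Import Classical.

(* A component that does not initiate a message [(v, c)] "reacts" to it: it
   receives it, ignores it because it does not listen on [c], or ignores a
   broadcast it cannot receive.  A send of the composite is a send of one
   component to which the other reacts; a receive is a joint reaction in
   which at least one component actually receives.  The reactions of a
   composite are exactly the pairs of reactions of its components, so both
   descriptions are commutative and associative up to rearranging pairs and
   the laws reduce to propositional reasoning. *)

Section Composition.
Variables (Ch U : Type) (star : Ch).

Definition hears_broadcast (T : CTS Ch U) : Prop := forall s, ls T s star.

Definition reacts (T : CTS Ch U) (v : U) (c : Ch) (s s' : St T) : Prop :=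
  trans T s (v, Rcv, c) s' \/ (~ ls T s c /\ s = s') \/
  (c = star /\ s = s' /\ ~ (exists t, trans T s (v, Rcv, c) t)).

Lemma wf_hears_broadcast (T : CTS Ch U) : wf_CTS star T -> hears_broadcast T.
Proof. intros (_ & _ & _ & _ & H). exact H. Qed.

Section Pair.
Variables T1 T2 : CTS Ch U.

Lemma comp_sendE s1 s2 s1' s2' v c :
  trans (comp star T1 T2) (s1, s2) (v, Snd, c) (s1', s2') <->
  trans T1 s1 (v, Snd, c) s1' /\ reacts T2 v c s2 s2' \/
  reacts T1 v c s1 s1' /\ trans T2 s2 (v, Snd, c) s2'.
Proof.
  simpl; unfold reacts; split.
  - intros [[_ H] | [[? _] | [-> H]]]; [tauto | discriminate | ].
    intuition (subst; tauto).
  - intuition (subst; tauto).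
Qed.

Lemma comp_receiveE s1 s2 s1' s2' v c :
  trans (comp star T1 T2) (s1, s2) (v, Rcv, c) (s1', s2') <->
  reacts T1 v c s1 s1' /\ reacts T2 v c s2 s2' /\
  (trans T1 s1 (v, Rcv, c) s1' \/ trans T2 s2 (v, Rcv, c) s2').
Proof.
  simpl; unfold reacts; split.
  - intros [[? _] | [[_ H] | [-> H]]]; [discriminate | | ];
      intuition (subst; tauto).
  - intuition (subst; tauto).
Qed.

Lemma comp_can_receive_broadcast s1 s2 v :
  (exists t, trans (comp star T1 T2) (s1, s2) (v, Rcv, star) t) <->
  (exists t1, trans T1 s1 (v, Rcv, star) t1) \/
  (exists t2, trans T2 s2 (v, Rcv, star) t2).
Proof.
  split.
  - intros [[t1 t2] Ht]; apply comp_receiveE in Ht as (_ & _ & [Ht | Ht]);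
      eauto.
  - intros [[t1 Ht1] | [t2 Ht2]].
    + destruct (classic (exists t2, trans T2 s2 (v, Rcv, star) t2))
        as [[t2 Ht2] | Hno].
      * exists (t1, t2); apply comp_receiveE; unfold reacts; tauto.
      * exists (t1, s2); apply comp_receiveE; unfold reacts; tauto.
    + destruct (classic (exists t1, trans T1 s1 (v, Rcv, star) t1))
        as [[t1 Ht1] | Hno].
      * exists (t1, t2); apply comp_receiveE; unfold reacts; tauto.
      * exists (s1, t2); apply comp_receiveE; unfold reacts; tauto.
Qed.

(* Without [hears_broadcast], a component deaf to [star] could still own
   broadcast receptions, and would then block the composite's reaction. *)
Lemma comp_reacts (H1 : hears_broadcast T1) (H2 : hears_broadcast T2)
  s1 s2 s1' s2' v c :
  reacts (comp star T1 T2) v c (s1, s2) (s1', s2') <->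
  reacts T1 v c s1 s1' /\ reacts T2 v c s2 s2'.
Proof.
  unfold reacts at 1; simpl ls.
  split.
  - intros [Hr | [[Hl Heq] | [-> [Heq Hn]]]].
    + apply comp_receiveE in Hr; tauto.
    + injection Heq as <- <-; unfold reacts; tauto.
    + injection Heq as <- <-; rewrite comp_can_receive_broadcast in Hn.
      unfold reacts; tauto.
  - intros [R1 R2].
    destruct (classic (trans T1 s1 (v, Rcv, c) s1' \/
                       trans T2 s2 (v, Rcv, c) s2')) as [Hr | Hnr].
    + left; apply comp_receiveE; tauto.
    + right; unfold reacts in R1, R2.
      destruct R1 as [? | [[Hl1 <-] | [-> [<- Hn1]]]]; [tauto | | ];
      destruct R2 as [? | [[Hl2 <-] | [Hc [<- Hn2]]]]; try tauto.
      * subst c; contradiction (Hl1 (H1 s1)).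
      * contradiction (Hl2 (H2 s2)).
      * right; rewrite comp_can_receive_broadcast; tauto.
Qed.

End Pair.

Definition unassoc {A B C : Type} (p : A * (B * C)) : (A * B) * C :=
  ((fst p, fst (snd p)), snd (snd p)).

Lemma comp_comm (T1 T2 : CTS Ch U) :
  equal_upto (comp star T1 T2) (comp star T2 T1) swap swap.
Proof.
  split; [exists swap; split; intros []; reflexivity | ].
  split; [exists swap; split; intros []; reflexivity | ].
  split; [simpl; tauto | ].
  split; [simpl; tauto | ].
  split; [intros []; simpl; tauto | ].
  split; [ | split; [intros []; reflexivity | intros [] c; simpl; tauto]].
  intros [s1 s2] [[v []] c] [s1' s2']; unfold swap; cbn [fst snd].
  - rewrite !comp_sendE; tauto.
  - rewrite !comp_receiveE; tauto.
Qed.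

Lemma comp_assoc (T1 T2 T3 : CTS Ch U) :
  hears_broadcast T1 -> hears_broadcast T2 -> hears_broadcast T3 ->
  equal_upto (comp star (comp star T1 T2) T3) (comp star T1 (comp star T2 T3))
    assoc assoc.
Proof.
  intros H1 H2 H3.
  split; [exists unassoc; split; [intros [[] ] | intros [? []]]; reflexivity | ].
  split; [exists unassoc; split; [intros [[] ] | intros [? []]]; reflexivity | ].
  split; [simpl; tauto | ].
  split; [simpl; tauto | ].
  split; [intros [[] ]; simpl; tauto | ].
  split; [ | split; [intros [[] ]; reflexivity | intros [[] ] c; simpl; tauto]].
  intros [[s1 s2] s3] [[v []] c] [[s1' s2'] s3']; unfold assoc; cbn [fst snd].
  - rewrite !comp_sendE, !comp_reacts by assumption; tauto.
  - rewrite !comp_receiveE, !comp_reacts by assumption; tauto.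
Qed.

End Composition.

Theorem mainTheorem1 (Ch U : Type) (star : Ch) (T1 T2 T3 : CTS Ch U) :
  wf_CTS star T1 -> wf_CTS star T2 -> wf_CTS star T3 ->
  equal_upto (comp star T1 T2) (comp star T2 T1) swap swap /\
  equal_upto (comp star (comp star T1 T2) T3) (comp star T1 (comp star T2 T3))
    assoc assoc.
Proof.
  intros W1 W2 W3.
  split.
  - apply comp_comm.
  - apply comp_assoc; apply wf_hears_broadcast; assumption.
Qed.
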